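(* For every integer $k\ge 1$ we have $I_k\subseteq W_k$.
   Context: Let $K$ be a field and $A$ the free associative (non-unital) $K$-algebra on countably many free generators $x_0,x_1,x_2,\dots$; the monomials $x_{i_1}\cdots x_{i_n}$ ($n\ge1$, $i_j\ge 0$) form a $K$-basis of $A$. Let $A^1$ be $A$ with a unity adjoined. For $n\ge1$ let $A(n)$ be the $K$-span of monomials of length $n$, and let $A(0)=K$ (scalars in $A^1$). Let $D$ be the unique derivation of $A$ with $D(x_i)=x_{i+1}$ for all $i$. For $k\ge1$ let $\mathcal X_k=\{x_0,\dots,x_{k-1}\}$. For $n\ge1$ let $W(k,n,0)$ be the set of monomials $x_{i_1}\cdots x_{i_n}$ of length $n$ with all $x_{i_j}\in\mathcal X_k$, let $W(k,n,l+1)=\{D(w): w\in W(k,n,l)\}$, and $W(k,n)=\bigcup_{t\ge0}W(k,n,t)$. Let $I_k$ be the two-sided ideal of $A$ generated by $W(k,2\cdot 100^{k^2})$, and let $W_k=\sum_{m\ge0}A(m\cdot 100^{k^2})\,W(k,100^{k^2})\,A^1$ (the $K$-linear span of products $u w v$ with $u\in A(m\cdot100^{k^2})$ for some $m\ge0$, $w\in W(k,100^{k^2})$, $v\in A^1$). *)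

From HB Require Import structures.
From mathcomp Require Import all_boot all_order all_algebra.
Set Implicit Arguments. Unset Strict Implicit. Unset Printing Implicit Defensive.
Import GRing.Theory.
Local Open Scope ring_scope.

(* A monomial x_{i1}...x_{in} of A^1 is the word [:: i1; ...; in] (the empty
   word is the unity of A^1). *)
Definition word := seq nat.

Section FreeAlg.
Variable K : fieldType.

(* Formal finite K-linear combinations of words; an element of A^1 is
   determined by its coefficient function [coef p]. *)
Definition ncp := seq (K * word).

Definition coef (p : ncp) (w : word) : K := \sum_(t <- p | t.2 == w) t.1.

Definition mono (w : word) : ncp := [:: (1, w)].

Definition nmul (p q : ncp) : ncp :=
  [seq (t.1 * s.1, t.2 ++ s.2) | t <- p, s <- q].

(* The derivation D with D(x_i) = x_{i+1}, on a monomial (Leibniz rule). *)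
Definition Dword (w : word) : ncp :=
  [seq (1, set_nth 0%N w i (nth 0%N w i).+1) | i <- iota 0 (size w)].

Definition Dp (p : ncp) : ncp :=
  flatten [seq [seq (t.1 * s.1, s.2) | s <- Dword t.2] | t <- p].

Definition inW (k n : nat) (p : ncp) : Prop :=
  exists (w : word) (t : nat),
    size w = n /\ all (fun i => i < k)%N w /\ p = iter t Dp (mono w).

Definition in_span (G : ncp -> Prop) (f : word -> K) : Prop :=
  exists l : seq (K * ncp),
    (forall cg, cg \in l -> G cg.2) /\
    f = (fun w => \sum_(cg <- l) cg.1 * coef cg.2 w).

(* Spanning set of the two-sided ideal I_k generated by W(k, 2*100^(k^2)):
   u w v with u, v monomials of A^1 and w in W(k, 2*100^(k^2)). *)
Definition Igen (k : nat) (p : ncp) : Prop :=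
  exists (u v : word) (w : ncp),
    inW k (2 * 100 ^ (k ^ 2))%N w /\ p = nmul (nmul (mono u) w) (mono v).

Definition I_ (k : nat) (f : word -> K) : Prop := in_span (Igen k) f.

(* Spanning set of W_k: u w v with u a monomial of length m*100^(k^2) (m>=0,
   m = 0 giving scalars), w in W(k,100^(k^2)), v a monomial of A^1. *)
Definition Wgen (k : nat) (p : ncp) : Prop :=
  exists (u v : word) (w : ncp),
    (exists m : nat, size u = m * 100 ^ (k ^ 2))%N /\
    inW k (100 ^ (k ^ 2))%N w /\ p = nmul (nmul (mono u) w) (mono v).

Definition W_ (k : nat) (f : word -> K) : Prop := in_span (Wgen k) f.

End FreeAlg.

From mathcomp Require Import all_boot all_order all_algebra.
From Stdlib Require Import FunctionalExtensionality.
Set Implicit Arguments. Unset Strict Implicit. Unset Printing Implicit Defensive.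
Import GRing.Theory.
Local Open Scope ring_scope.

(* Write N = 100^(k^2).  Since W_k is a linear
   span, it suffices to show that every spanning element u D^t(s) v of I_k
   (u, v monomials, s a monomial of length 2N over x_0..x_{k-1}) lies in W_k.
   Let d < N with N | |u| + d.  By the Leibniz rule D^t(a s') is a linear
   combination of D^i(x_a) D^j(s') = x_(a+i) D^j(s'), so the first letter
   of s can be moved into the left factor u.  Doing this d times reduces to
   the case N | |u| and |s| >= N; there, splitting s = s1 s2 with |s1| = N
   and using Leibniz once more, u D^t(s) v is a combination of the elements
   u D^i(s1) (b v), b a monomial of D^j(s2), which are generators of W_k.

   Elements of A^1 are handled through the representation [ncp K] of
   formal combinations of words; two representations are identified when
   every linear functional on words takes the same value on them. *)

Section FormalCombinations.
Variable K : fieldType.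

(* The value at the formal combination p of the linear functional on A^1
   determined by its values g on monomials. *)
Definition pairing (g : word -> K) (p : ncp K) : K := \sum_(t <- p) t.1 * g t.2.

Definition equivp (p q : ncp K) : Prop := forall g, pairing g p = pairing g q.

Definition scale (c : K) (p : ncp K) : ncp K := [seq (c * t.1, t.2) | t <- p].

Lemma equivp_refl p : equivp p p. Proof. by []. Qed.
Lemma equivp_sym p q : equivp p q -> equivp q p. Proof. by move=> e g. Qed.

Lemma pairing_ext g g' p : g =1 g' -> pairing g p = pairing g' p.
Proof. by move=> e; apply: eq_bigr => t _; rewrite e. Qed.

Lemma pairing_cat g p q : pairing g (p ++ q) = pairing g p + pairing g q.
Proof. by rewrite /pairing big_cat. Qed.

Lemma pairing_scale g c p : pairing g (scale c p) = c * pairing g p.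
Proof. by rewrite /pairing big_map mulr_sumr; apply: eq_bigr => t _; rewrite mulrA. Qed.

Lemma pairing_mono g w : pairing g (mono K w) = g w.
Proof. by rewrite /pairing /mono big_seq1 mul1r. Qed.

Lemma pairing_flatten (T : Type) g (F : T -> ncp K) l :
  pairing g (flatten (map F l)) = \sum_(x <- l) pairing g (F x).
Proof. by rewrite /pairing big_flatten big_map. Qed.

Lemma pairingD g g' p :
  pairing (fun w => g w + g' w) p = pairing g p + pairing g' p.
Proof. by rewrite /pairing -big_split; apply: eq_bigr => t _; rewrite mulrDr. Qed.

Lemma pairing_swap (h : word -> word -> K) p q :
  pairing (fun x => pairing (h x) q) p = pairing (fun y => pairing (h^~ y) p) q.
Proof.
rewrite /pairing; under eq_bigr => t _ do rewrite mulr_sumr.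
rewrite exchange_big /=; apply: eq_bigr => s _; rewrite mulr_sumr.
by apply: eq_bigr => t _; rewrite mulrCA.
Qed.

Lemma coef_pairing p w : coef p w = pairing (fun w' => (w' == w)%:R) p.
Proof.
rewrite /coef /pairing big_mkcond; apply: eq_bigr => t _.
by case: (t.2 == w); rewrite ?mulr1 ?mulr0.
Qed.

Lemma equivp_coef p q : equivp p q -> coef p = coef q.
Proof. by move=> e; apply: functional_extensionality => w; rewrite !coef_pairing e. Qed.

Lemma pairing_nmul g p q :
  pairing g (nmul p q) = pairing (fun a => pairing (fun b => g (a ++ b)) q) p.
Proof.
rewrite /pairing /nmul big_flatten big_map; apply: eq_bigr => t _.
by rewrite big_map mulr_sumr; apply: eq_bigr => s _; rewrite mulrA.
Qed.

Lemma equivp_nmul p p' q q' :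
  equivp p p' -> equivp q q' -> equivp (nmul p q) (nmul p' q').
Proof. by move=> e1 e2 g; rewrite !pairing_nmul e1; apply: pairing_ext => a. Qed.

Lemma mono_cat x y : equivp (mono K (x ++ y)) (nmul (mono K x) (mono K y)).
Proof. by move=> g; rewrite pairing_nmul !pairing_mono. Qed.

Lemma pairing_Dp g p : pairing g (Dp p) = pairing (fun w => pairing g (Dword K w)) p.
Proof.
rewrite /pairing /Dp big_flatten big_map; apply: eq_bigr => t _.
by rewrite big_map mulr_sumr; apply: eq_bigr => s _; rewrite mulrA.
Qed.

Lemma equivp_Dp p q : equivp p q -> equivp (Dp p) (Dp q).
Proof. by move=> e g; rewrite !pairing_Dp e. Qed.

Lemma equivp_iter_Dp t p q :
  equivp p q -> equivp (iter t (@Dp K) p) (iter t (@Dp K) q).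
Proof. by elim: t => [//|t IH] e /=; apply/equivp_Dp/IH. Qed.

Lemma pairing_Dword_cons g a w :
  pairing g (Dword K (a :: w)) =
  g (a.+1 :: w) + pairing (fun w' => g (a :: w')) (Dword K w).
Proof.
rewrite /Dword /= /pairing big_cons /= mul1r; congr (_ + _).
rewrite -[1%N]/(1 + 0)%N iotaDl big_map !big_map.
by apply: eq_bigr => i _ /=; rewrite add0n.
Qed.

Lemma pairing_Dword_cat g x y :
  pairing g (Dword K (x ++ y)) =
  pairing (fun w => g (w ++ y)) (Dword K x) + pairing (fun w => g (x ++ w)) (Dword K y).
Proof.
elim: x g => [|a x IH] g /=; first by rewrite /Dword /= /pairing big_nil add0r.
by rewrite !pairing_Dword_cons IH addrA.
Qed.

Lemma Dp_nmul p q : equivp (Dp (nmul p q)) (nmul (Dp p) q ++ nmul p (Dp q)).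
Proof.
move=> g; rewrite pairing_cat pairing_Dp pairing_nmul !pairing_nmul pairing_Dp.
rewrite -pairingD; apply: pairing_ext => a /=.
rewrite pairing_Dp -pairing_swap -pairingD; apply: pairing_ext => b /=.
by rewrite pairing_Dword_cat.
Qed.

Definition leibniz_comb (P Q : ncp K) (l : seq (K * nat * nat)) : ncp K :=
  flatten [seq scale x.1.1 (nmul (iter x.1.2 (@Dp K) P) (iter x.2 (@Dp K) Q)) | x <- l].

Lemma leibniz_iter t P Q :
  exists l, equivp (iter t (@Dp K) (nmul P Q)) (leibniz_comb P Q l).
Proof.
elim: t => [|t [l IH]].
  exists [:: (1, 0%N, 0%N)] => g.
  by rewrite /leibniz_comb pairing_flatten big_seq1 pairing_scale mul1r.
exists (flatten [seq [:: (x.1.1, x.1.2.+1, x.2); (x.1.1, x.1.2, x.2.+1)] | x <- l]) => g.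
rewrite /= pairing_Dp IH /leibniz_comb !pairing_flatten big_flatten big_map /=.
apply: eq_bigr => x _.
rewrite big_cons big_seq1 !pairing_scale -mulrDr -!pairing_cat; congr (_ * _).
by rewrite -pairing_Dp Dp_nmul.
Qed.

Lemma iter_Dp_letter i a : equivp (iter i (@Dp K) (mono K [:: a])) (mono K [:: (a + i)%N]).
Proof.
elim: i => [|i IH] g /=; first by rewrite addn0.
by rewrite pairing_Dp IH !pairing_mono /Dword /= /pairing addnS.
Qed.

Definition sandwich (u : word) (X : ncp K) (v : word) : ncp K :=
  nmul (nmul (mono K u) X) (mono K v).

Lemma pairing_sandwich g u X v :
  pairing g (sandwich u X v) = pairing (fun b => g (u ++ b ++ v)) X.
Proof.
rewrite /sandwich pairing_nmul (pairing_ext (g' := fun a => g (a ++ v))) ?pairing_nmul;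
  last by move=> a; rewrite pairing_mono.
by rewrite pairing_mono; apply: pairing_ext => b; rewrite catA.
Qed.

Lemma equivp_sandwich u v X Y : equivp X Y -> equivp (sandwich u X v) (sandwich u Y v).
Proof. by move=> e g; rewrite !pairing_sandwich. Qed.

Lemma sandwich_flatten (T : Type) u v (c : T -> K) (F : T -> ncp K) l :
  equivp (sandwich u (flatten [seq scale (c x) (F x) | x <- l]) v)
         (flatten [seq scale (c x) (sandwich u (F x) v) | x <- l]).
Proof.
move=> g; rewrite pairing_sandwich !pairing_flatten; apply: eq_bigr => x _.
by rewrite !pairing_scale pairing_sandwich.
Qed.

Lemma sandwich_nmul_right u v P Q :
  equivp (sandwich u (nmul P Q) v)
         (flatten [seq scale b.1 (sandwich u P (b.2 ++ v)) | b <- Q]).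
Proof.
move=> g; rewrite pairing_sandwich pairing_nmul pairing_swap pairing_flatten.
rewrite {1}/pairing; apply: eq_bigr => b _.
rewrite pairing_scale pairing_sandwich; congr (_ * _).
by apply: pairing_ext => a; rewrite -!catA.
Qed.

Lemma sandwich_letter u v a Q :
  equivp (sandwich u (nmul (mono K [:: a]) Q) v) (sandwich (u ++ [:: a]) Q v).
Proof.
move=> g; rewrite !pairing_sandwich pairing_nmul pairing_mono.
by apply: pairing_ext => b; rewrite -!catA.
Qed.

Section Span.
Variable G : ncp K -> Prop.

Lemma in_span0 : in_span G (fun _ => 0).
Proof.
by exists [::]; split => //; apply: functional_extensionality => w; rewrite big_nil.
Qed.

Lemma in_spanD f f' : in_span G f -> in_span G f' -> in_span G (fun w => f w + f' w).
Proof.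
move=> [l1 [H1 ->]] [l2 [H2 ->]]; exists (l1 ++ l2); split.
  by move=> cg; rewrite mem_cat => /orP [] ?; [apply: H1 | apply: H2].
by apply: functional_extensionality => w; rewrite big_cat.
Qed.

Lemma in_spanZ c f : in_span G f -> in_span G (fun w => c * f w).
Proof.
move=> [l [H ->]]; exists [seq (c * cg.1, cg.2) | cg <- l]; split.
  by move=> cg /mapP [x hx ->]; exact: (H x hx).
apply: functional_extensionality => w; rewrite big_map mulr_sumr.
by apply: eq_bigr => x _; rewrite mulrA.
Qed.

Lemma in_span_gen p : G p -> in_span G (coef p).
Proof.
move=> Gp; exists [:: (1, p)]; split; first by move=> cg; rewrite inE => /eqP ->.
by apply: functional_extensionality => w; rewrite big_seq1 mul1r.
Qed.

Definition spanp (p : ncp K) : Prop := in_span G (coef p).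

Lemma spanp_equiv p q : equivp p q -> spanp p -> spanp q.
Proof. by move=> /equivp_coef e; rewrite /spanp e. Qed.

Lemma spanp_flatten (T : Type) (c : T -> K) (F : T -> ncp K) l :
  (forall x, spanp (F x)) -> spanp (flatten [seq scale (c x) (F x) | x <- l]).
Proof.
move=> h; rewrite /spanp; elim: l => [|x l IH] /=.
  have -> : coef (@nil (K * word)) = (fun _ => 0).
    by apply: functional_extensionality => w; rewrite /coef big_nil.
  exact: in_span0.
have -> : coef (scale (c x) (F x) ++ flatten [seq scale (c y) (F y) | y <- l]) =
          (fun w => c x * coef (F x) w + coef (flatten [seq scale (c y) (F y) | y <- l]) w).
  by apply: functional_extensionality => w; rewrite !coef_pairing pairing_cat pairing_scale.
exact/in_spanD/IH/in_spanZ/h.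
Qed.

End Span.

Lemma in_span_trans (G H : ncp K -> Prop) f :
  (forall p, G p -> spanp H p) -> in_span G f -> in_span H f.
Proof.
move=> GH [l [Gl ->]]; elim: l Gl => [|cg l IH] Gl.
  have -> : (fun w : word => \sum_(cg <- [::]) cg.1 * coef cg.2 w) = (fun _ => 0 : K).
    by apply: functional_extensionality => w; rewrite big_nil.
  exact: in_span0.
have -> : (fun w : word => \sum_(cg' <- cg :: l) cg'.1 * coef cg'.2 w) =
          (fun w => cg.1 * coef cg.2 w + \sum_(cg' <- l) cg'.1 * coef cg'.2 w).
  by apply: functional_extensionality => w; rewrite big_cons.
apply: in_spanD; first by apply/in_spanZ/GH/Gl; rewrite mem_head.
by apply: IH => x hx; apply: Gl; rewrite inE hx orbT.
Qed.

Section SandwichInW.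
Variable k : nat.
Let N := (100 ^ (k ^ 2))%N.

Lemma sandwich_Wgen u y i v :
  all (fun j => j < k)%N y -> size y = N -> (N %| size u)%N ->
  spanp (Wgen k) (sandwich u (iter i (@Dp K) (mono K y)) v).
Proof.
move=> hy sy hu; apply: in_span_gen.
exists u, v, (iter i (@Dp K) (mono K y)); split; first by exists (size u %/ N)%N; rewrite divnK.
by split => //; exists y, i.
Qed.

Lemma sandwich_leibniz u v t P Q :
  (forall i j, spanp (Wgen k) (sandwich u (nmul (iter i (@Dp K) P) (iter j (@Dp K) Q)) v)) ->
  spanp (Wgen k) (sandwich u (iter t (@Dp K) (nmul P Q)) v).
Proof.
move=> h; have [l el] := leibniz_iter t P Q.
apply: (spanp_equiv (equivp_sym (equivp_sandwich u v el))).
by apply: (spanp_equiv (equivp_sym (sandwich_flatten _ _ _ _ _))); apply: spanp_flatten.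
Qed.

(* Aligned case: N | |u| and |s| >= N; split s after its first N letters. *)
Lemma sandwich_aligned s u t v :
  all (fun i => i < k)%N s -> (N <= size s)%N -> (N %| size u)%N ->
  spanp (Wgen k) (sandwich u (iter t (@Dp K) (mono K s)) v).
Proof.
move=> hs hN hu; rewrite -(cat_take_drop N s).
apply: (spanp_equiv (equivp_sandwich u v (equivp_iter_Dp t (equivp_sym (mono_cat _ _))))).
apply: sandwich_leibniz => i j.
apply: (spanp_equiv (equivp_sym (sandwich_nmul_right _ _ _ _))).
apply: spanp_flatten => b; apply: sandwich_Wgen => //; last by rewrite size_takel.
by move: hs; rewrite -{1}(cat_take_drop N s) all_cat => /andP [].
Qed.

(* General case: move d letters of s into u until |u| is a multiple of N. *)
Lemma sandwich_in_W d u s t v :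
  all (fun i => i < k)%N s -> (N + d <= size s)%N -> (N %| size u + d)%N ->
  spanp (Wgen k) (sandwich u (iter t (@Dp K) (mono K s)) v).
Proof.
elim: d u s t => [|d IH] u s t hs hN hu; first by rewrite !addn0 in hN hu; apply: sandwich_aligned.
case: s hs hN => [|a s]; first by rewrite addnS.
move=> /= /andP [_ hs] hN.
apply: (spanp_equiv (equivp_sandwich u v (equivp_iter_Dp t (equivp_sym (mono_cat [:: a] s))))).
apply: sandwich_leibniz => i j.
apply: (spanp_equiv (equivp_sym (equivp_sandwich u v
          (equivp_nmul (iter_Dp_letter i a) (equivp_refl _))))).
apply: (spanp_equiv (equivp_sym (sandwich_letter _ _ _ _))).
apply: IH => //; first by rewrite addnS ltnS in hN.
by rewrite size_cat /= addn1 addSnnS.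
Qed.

End SandwichInW.

End FormalCombinations.

Theorem mainTheorem2 (K : fieldType) (k : nat) :
  (1 <= k)%N -> forall f : word -> K, I_ k f -> W_ k f.
Proof.
move=> _ f; apply: in_span_trans => _ [u [v [w [[s [t [size_s [hs ->]]]] ->]]]].
set N := (100 ^ (k ^ 2))%N.
have N_gt0 : (0 < N)%N by rewrite expn_gt0.
(* Pad |u| up to the next multiple of N; this takes at most N letters of s. *)
apply: (@sandwich_in_W K k (N - size u %% N)) => //.
  by rewrite size_s mul2n -addnn leq_add2l leq_subr.
rewrite {1}(divn_eq (size u) N) -addnA subnKC; last by rewrite ltnW // ltn_pmod.
by rewrite dvdn_add // dvdn_mull.
Qed.
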